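(* For every $g\in\mathbb R$ and all $\eta,\zeta\in\mathcal F^{\mathcal S}$, \[ \ell_{\mathrm C,\infty}(\mathcal T_g\eta,\mathcal T_g\zeta)\le\ell_{\mathrm C,\infty}(\eta,\zeta). \]
   Context: Finite state set $\mathcal S=\{1,\dots,m\}$ and transition matrix $P=(P_{ij})$ on $\mathcal S$ (induced by a fixed policy in a finite MDP). $R_{ij}$ is the finite-valued $[0,1]$-valued random one-step reward conditioned on transition $i\to j$; for $g\in\mathbb R$, $\nu^{(g)}_{ij}:=\mathrm{Law}(R_{ij}-g)$. $\mathcal F^{\mathcal S}$ is the set of families $\eta=(\eta_i)_{i\in\mathcal S}$ of probability laws on $\mathbb R$ with finite second moment, and $(\mathcal T_g\eta)_i:=\sum_jP_{ij}(\nu^{(g)}_{ij}\ast\eta_j)$. Cramér distance $\ell_{\mathrm C}(\eta,\zeta):=(\int_{\mathbb R}(F_\eta-F_\zeta)^2\,\mathrm dx)^{1/2}$ with $F$ the cdfs, and $\ell_{\mathrm C,\infty}(\eta,\zeta):=\max_i\ell_{\mathrm C}(\eta_i,\zeta_i)$. *)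

From HB Require Import structures.
From mathcomp Require Import all_boot all_order all_algebra.
From mathcomp Require Import all_classical all_reals all_analysis.
Set Implicit Arguments. Unset Strict Implicit. Unset Printing Implicit Defensive.
Import Order.TTheory GRing.Theory Num.Theory.
Local Open Scope classical_set_scope.
Local Open Scope ring_scope.

Section Defs.
Variable R : realType.

Definition cdfR (mu : set R -> \bar R) (x : R) : R := fine (mu `]-oo, x]%classic).

Definition cramer (mu nu : set R -> \bar R) : \bar R :=
  sqrte (\int[lebesgue_measure]_x (((cdfR mu x - cdfR nu x) ^+ 2)%:E))%E.

Definition cramer_inf (m : nat) (eta zeta : 'I_m -> set R -> \bar R) : \bar R :=
  (\big[maxe/0%E]_(i < m) cramer (eta i) (zeta i))%E.

Definition shift_law (nu : set R -> \bar R) (g : R) : set R -> \bar R :=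
  pushforward nu (fun r => r - g).

Definition conv (mu nu : set R -> \bar R) : set R -> \bar R :=
  pushforward (mu \x nu)%E (fun p : R * R => p.1 + p.2).

(* distributional Bellman operator T_g; nu i j is the law of R_ij *)
Definition Tg (m : nat) (P : 'M[R]_m) (nu : 'I_m -> 'I_m -> set R -> \bar R)
  (g : R) (eta : 'I_m -> set R -> \bar R) : 'I_m -> set R -> \bar R :=
  fun i A => (\sum_(j < m) (P i j)%:E * conv (shift_law (nu i j) g) (eta j) A)%E.

Definition finite_second_moment (mu : probability R R) : Prop :=
  (\int[mu]_x ((x ^+ 2)%:E) < +oo)%E.

Definition finite_01_law (mu : probability R R) : Prop :=
  exists s : seq R, all (fun r => (0 <= r <= 1)) s /\ mu [set x | x \in s] = 1%E.

Definition stochastic (m : nat) (P : 'M[R]_m) : Prop :=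
  (forall i j, 0 <= P i j) /\ (forall i, \sum_(j < m) P i j = 1).

End Defs.

From Pilot Require Import Defs.
From HB Require Import structures.
From mathcomp Require Import all_boot all_order all_algebra.
From mathcomp Require Import all_classical all_reals all_analysis.
From mathcomp Require Import measurable_realfun ring lra.
Set Implicit Arguments. Unset Strict Implicit. Unset Printing Implicit Defensive.
Import Order.TTheory GRing.Theory Num.Theory.
Local Open Scope classical_set_scope.
Local Open Scope ring_scope.

(* Since every R_ij takes finitely many values, the cdf of (T_g eta)_i at x is
   the convex combination sum_j P_ij sum_r w_ijr F_(eta_j)(x - r + g), and the
   same weights and shifts appear for zeta.  Hence F_(T_g eta)_i - F_(T_g zeta)_i
   is a convex combination of translates of the differences F_(eta_j) - F_(zeta_j).
   Jensen's inequality for the square, applied pointwise, and the translation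
   invariance of Lebesgue measure bound its squared L2 norm by the largest
   squared Cramer distance max_j l_C(eta_j, zeta_j)^2.  The argument never needs
   the distances to be finite. *)

Section lebesgue_translation.
Variable R : realType.
Local Notation lebesgue := (@lebesgue_measure R).

Lemma measurable_addr (c : R) : measurable_fun [set: R] (fun x => x + c).
Proof. exact: measurable_funD. Qed.

Lemma lebesgue_measure_translate (c : R) (A : set (measurableTypeR R)) :
  measurable A ->
  pushforward lebesgue ((fun x => x + c) : R -> measurableTypeR R) A = lebesgue A.
Proof.
move=> mA; apply/esym/lebesgue_measure_unique => //=; first exact: measurable_addr.
move=> _ _ [[a b] _ <-].
rewrite /pushforward.
have -> : (fun x => x + c) @^-1` `]a, b]%classic = `]a - c, b - c]%classic.
  by apply/seteqP; split => x /=; rewrite !in_itv /= ltrBlDr lerBrDr.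
rewrite !lebesgue_measure_itv /= !lte_fin ltrD2r.
by case: ifP => // _; rewrite -!EFinD opprB addrA subrK.
Qed.

Lemma ge0_integral_translate (c : R) (f : R -> \bar R) :
  measurable_fun [set: R] f -> (forall x, (0 <= f x)%E) ->
  (\int[lebesgue]_x f (x + c)%R = \int[lebesgue]_x f x)%E.
Proof.
move=> mf f0.
pose shift := (fun x => x + c) : measurableTypeR R -> measurableTypeR R.
transitivity (\int[pushforward lebesgue shift]_x f x)%E.
  by rewrite ge0_integral_pushforward //; exact: measurable_addr.
apply: eq_measure_integral; first exact: measurable_addr.
by move=> ? A mA _; exact: lebesgue_measure_translate.
Qed.

End lebesgue_translation.

Section cdfR_probability.
Variables (R : realType) (mu : probability R R).

Lemma cdfRE (x : R) : mu `]-oo, x]%classic = (cdfR mu x)%:E.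
Proof. by rewrite /cdfR fineK // fin_num_measure. Qed.

Lemma cdfR_ge0 (x : R) : 0 <= cdfR mu x.
Proof. by rewrite -lee_fin -cdfRE. Qed.

Lemma cdfR_nondecreasing : {homo cdfR mu : x y / x <= y}.
Proof.
move=> x y xy; rewrite -lee_fin -!cdfRE; apply: le_measure; rewrite ?inE //.
by move=> z /=; rewrite !in_itv /= => /le_trans; apply.
Qed.

Lemma measurable_cdfR : measurable_fun [set: R] (cdfR mu).
Proof. by apply: nondecreasing_measurable => //; exact: cdfR_nondecreasing. Qed.

End cdfR_probability.

Lemma bigsetU_set1 (T : eqType) (t : seq T) :
  \big[setU/set0]_(r <- t) [set r] = [set` t].
Proof.
elim: t => [|h t IH]; first by rewrite big_nil; apply/seteqP; split.
rewrite big_cons IH; apply/seteqP; split => x /=; rewrite in_cons.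
  by case=> [->|->]; rewrite ?eqxx ?orbT.
by case/orP => [/eqP ->|xt]; [left|right].
Qed.

Section finitely_supported_probability.
Variables (R : realType) (nu : probability R R) (s : seq R).
Hypothesis nu_s : nu [set` s] = 1%E.

Lemma ge0_integral_finite_support (f : R -> R) :
  measurable_fun [set: R] f -> (forall x, 0 <= f x) ->
  (\int[nu]_x (f x)%:E = (\sum_(r <- undup s) fine (nu [set r]) * f r)%:E)%E.
Proof.
move=> mf f0.
set S := \big[setU/set0]_(r <- undup s) [set r].
have SE : S = [set` s].
  by rewrite /S bigsetU_set1; apply/seteqP; split => x /=; rewrite mem_undup.
have mS : measurable S by apply: bigsetU_measurable => r _; exact: measurable_set1.
have mfE : measurable_fun [set: R] (fun x => (f x)%:E) by exact/measurable_EFinP.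
have nuSC : nu (~` S) = 0%E by rewrite probability_setC // SE nu_s subee.
rewrite (@ge0_negligible_integral _ _ _ nu setT (~` S)) //; last 2 first.
- exact: measurableC.
- by move=> x _; rewrite lee_fin.
rewrite setDE setCK setTI /S ge0_integral_bigsetU //; last 4 first.
- exact: undup_uniq.
- by move=> i j _ _ /= [x [-> ->]].
- exact: measurable_funS mfE.
- by move=> x _; rewrite lee_fin.
rewrite -sumEFin; apply: eq_bigr => r _.
rewrite (eq_integral (fun _ => (f r)%:E)); last by move=> x; rewrite inE /= => ->.
by rewrite integral_cst //= EFinM muleC fineK // fin_num_measure.
Qed.

Lemma sum_finite_support_weights : \sum_(r <- undup s) fine (nu [set r]) = 1.
Proof.
have := @ge0_integral_finite_support (fun => 1) (measurable_cst _) (fun => ler01).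
rewrite integral_cst //= probability_setT mule1.
by under eq_bigr do rewrite mulr1; case.
Qed.

End finitely_supported_probability.

Section convolution_cdf.
Variable R : realType.

Lemma conv_shift_law_itv (nu mu : probability R R) (g x : R) :
  Defs.conv (shift_law nu g) mu `]-oo, x]%classic =
  (\int[nu]_r (cdfR mu (x - (r - g)))%:E)%E.
Proof.
rewrite /Defs.conv {1}/pushforward /product_measure1 /shift_law.
rewrite (eq_integral (fun y : R => (cdfR mu (x - y))%:E)); last first.
  move=> y _; rewrite -cdfRE; congr (mu _).
  by apply/seteqP; split => z; rewrite /xsection /= inE /= !in_itv /= lerBrDl.
move=> mshift; rewrite (ge0_integral_pushforward mshift) //.
- apply/measurable_EFinP/(measurableT_comp (measurable_cdfR mu)).
  by apply: measurable_funB => //; exact: measurable_cst.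
- by move=> y _; rewrite lee_fin cdfR_ge0.
- exact: measurable_addr.
Qed.

End convolution_cdf.

Section jensen_sqr.
Variables (R : realType) (I : Type) (s : seq I) (c : I -> R).
Hypotheses (c_ge0 : forall i, 0 <= c i) (c_sum1 : \sum_(i <- s) c i = 1).

Lemma jensen_sqr (y : I -> R) :
  (\sum_(i <- s) c i * y i) ^+ 2 <= \sum_(i <- s) c i * y i ^+ 2.
Proof.
set M := \sum_(i <- s) c i * y i.
have variance_ge0 : 0 <= \sum_(i <- s) c i * (y i - M) ^+ 2.
  by apply: sumr_ge0 => i _; rewrite mulr_ge0 // sqr_ge0.
rewrite [X in 0 <= X](_ : _ =
    \sum_(i <- s) c i * y i ^+ 2 - (M *+ 2) * M + M ^+ 2 * \sum_(i <- s) c i)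
    in variance_ge0; last first.
  rewrite /M !mulr_sumr -sumrB -big_split /=.
  by apply: eq_bigr => i _; ring.
by move: variance_ge0; rewrite c_sum1 mulr1; lra.
Qed.

Local Notation lebesgue := (@lebesgue_measure R).

Lemma integral_sqr_convex_comb_le (F : I -> R -> R) (B : \bar R) :
  (forall i, measurable_fun [set: R] (F i)) ->
  (forall i, (\int[lebesgue]_x ((F i x) ^+ 2)%:E <= B)%E) ->
  (\int[lebesgue]_x ((\sum_(i <- s) c i * F i x) ^+ 2)%:E <= B)%E.
Proof.
move=> mF FB.
have mcF2 i : measurable_fun [set: R] (fun x => (c i * F i x ^+ 2)%:E).
  apply/measurable_EFinP; apply: measurable_funM; first exact: measurable_cst.
  exact: measurable_funX.
apply: (@le_trans _ _ (\int[lebesgue]_x (\sum_(i <- s) (c i * F i x ^+ 2)%:E))%E).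
  apply: ge0_le_integral => //.
  - by move=> x _; rewrite lee_fin sqr_ge0.
  - apply/measurable_EFinP; apply: measurable_funX.
    by apply: measurable_sum => i; apply: measurable_funM => //; exact: mF.
  - exact: emeasurable_sum.
  - by move=> x _; rewrite sumEFin lee_fin jensen_sqr.
rewrite ge0_integral_sum //; last by move=> i x _; rewrite lee_fin mulr_ge0 ?sqr_ge0.
apply: (@le_trans _ _ (\sum_(i <- s) ((c i)%:E * B))%E).
  apply: lee_sum => i _.
  under eq_integral do rewrite EFinM.
  rewrite ge0_integralZl_EFin //.
  - by apply: lee_wpmul2l; [rewrite lee_fin | exact: FB].
  - by move=> x _; rewrite lee_fin sqr_ge0.
  - by apply/measurable_EFinP; apply: measurable_funX; exact: mF.
by rewrite -ge0_sume_distrl ?sumEFin ?c_sum1 ?mul1e // => i _; rewrite lee_fin.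
Qed.

End jensen_sqr.

Section cramer.
Variable R : realType.

Lemma cramer_ge0 (mu nu : set R -> \bar R) : (0 <= cramer mu nu)%E.
Proof. exact: sqrte_ge0. Qed.

Lemma sqr_cramer (mu nu : set R -> \bar R) :
  (cramer mu nu ^+ 2 =
   \int[lebesgue_measure]_x ((cdfR mu x - cdfR nu x) ^+ 2)%:E)%E.
Proof. by rewrite sqr_sqrte // integral_ge0 // => x _; rewrite lee_fin sqr_ge0. Qed.

End cramer.

Section bellman_cdf.
Variables (R : realType) (m : nat) (P : 'M[R]_m).
Variables (nu : 'I_m -> 'I_m -> probability R R) (s : 'I_m -> 'I_m -> seq R).
Hypothesis nu_s : forall i j, nu i j [set` s i j] = 1%E.
Variable g : R.

Local Notation T eta := (Tg P (fun i j => nu i j) g (fun i => eta i)).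

Lemma cdfR_Tg (eta : 'I_m -> probability R R) i x :
  cdfR (T eta i) x = \sum_(j < m) P i j *
    \sum_(r <- undup (s i j)) fine (nu i j [set r]) * cdfR (eta j) (x - (r - g)).
Proof.
have summandE j :
    ((P i j)%:E * Defs.conv (shift_law (nu i j) g) (eta j) `]-oo, x]%classic)%E =
    (P i j * \sum_(r <- undup (s i j))
       fine (nu i j [set r]) * cdfR (eta j) (x - (r - g)))%:E.
  rewrite conv_shift_law_itv (ge0_integral_finite_support (nu_s i j)) -?EFinM //.
    apply: (measurableT_comp (measurable_cdfR _)).
    by apply: measurable_funB; [exact: measurable_cst | exact: measurable_addr].
  by move=> r; exact: cdfR_ge0.
by rewrite {1}/cdfR /Tg (eq_bigr _ (fun j _ => summandE j)) sumEFin.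
Qed.

Lemma sub_cdfR_Tg (eta zeta : 'I_m -> probability R R) i x :
  cdfR (T eta i) x - cdfR (T zeta i) x = \sum_(j < m) P i j *
    \sum_(r <- undup (s i j)) fine (nu i j [set r]) *
      (cdfR (eta j) (x - (r - g)) - cdfR (zeta j) (x - (r - g))).
Proof.
rewrite !cdfR_Tg -sumrB; apply: eq_bigr => j _.
rewrite -mulrBr -sumrB; congr (_ * _); apply: eq_bigr => r _.
by rewrite mulrBr.
Qed.

Hypothesis P_stochastic : stochastic P.

Lemma integral_sqr_sub_cdfR_Tg_le (eta zeta : 'I_m -> probability R R) i
    (B : \bar R) :
  (forall j, \int[lebesgue_measure]_x
      ((cdfR (eta j) x - cdfR (zeta j) x) ^+ 2)%:E <= B)%E ->
  (\int[lebesgue_measure]_x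
      ((cdfR (T eta i) x - cdfR (T zeta i) x) ^+ 2)%:E <= B)%E.
Proof.
move=> hB; under eq_integral => x _ do rewrite sub_cdfR_Tg.
have mD j : measurable_fun [set: R] (fun x => cdfR (eta j) x - cdfR (zeta j) x).
  by apply: measurable_funB; exact: measurable_cdfR.
have mDshift j r : measurable_fun [set: R]
    (fun x => cdfR (eta j) (x - (r - g)) - cdfR (zeta j) (x - (r - g))).
  exact: measurableT_comp (mD j) (measurable_addr _).
apply: integral_sqr_convex_comb_le => [j||j|j].
- exact: P_stochastic.1.
- exact: P_stochastic.2.
- by apply: measurable_sum => r; apply: measurable_funM.
apply: integral_sqr_convex_comb_le => [r||r|r].
- exact: fine_ge0.
- exact: sum_finite_support_weights.
- exact: mDshift.
have mD2 : measurable_fun [set: R]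
    (fun y => ((cdfR (eta j) y - cdfR (zeta j) y) ^+ 2)%:E).
  by apply/measurable_EFinP; exact: measurable_funX.
rewrite (ge0_integral_translate (- (r - g)) mD2); first exact: hB.
by move=> y; rewrite lee_fin sqr_ge0.
Qed.

End bellman_cdf.

Theorem lemma3 (R : realType) (m : nat) (P : 'M[R]_m)
  (nu : 'I_m -> 'I_m -> probability R R)
  (hP : stochastic P) (hnu : forall i j, finite_01_law (nu i j))
  (g : R) (eta zeta : 'I_m -> probability R R)
  (heta : forall i, finite_second_moment (eta i))
  (hzeta : forall i, finite_second_moment (zeta i)) :
  (cramer_inf (Tg P (fun i j => nu i j) g (fun i => eta i))
              (Tg P (fun i j => nu i j) g (fun i => zeta i))
   <= cramer_inf (fun i => eta i) (fun i => zeta i))%E.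
Proof.
have [s nu_s] : exists s : 'I_m -> 'I_m -> seq R,
    forall i j, nu i j [set` s i j] = 1%E.
  by exists (fun i j => sval (cid (hnu i j))) => i j; case: (svalP (cid (hnu i j))).
set B := cramer_inf (fun i => eta i) (fun i => zeta i).
have B_ge0 : (0 <= B)%E by exact: bigmax_ge_id.
apply: bigmax_le => // i _.
rewrite -lee_sqr ?cramer_ge0 // sqr_cramer.
apply: (integral_sqr_sub_cdfR_Tg_le nu_s) => // j.
by rewrite -sqr_cramer lee_sqr ?cramer_ge0 //; exact: le_bigmax.
Qed.
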